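(* Let $K$ be a twisted knot diagram with an even number of bars. Then $K$ admits a coloring by the twisted biquandle $(\mathbb{Z},\ a\ast b=a\circ b=a+1,\ f(a)=-a)$ if and only if $S(K)=0$.
   Context: A twisted knot diagram is a virtual knot diagram with finitely many bars on its edges. Segments are the pieces between real crossings and bars. A coloring by $(\mathbb{Z}, a\ast b=a\circ b=a+1, f(a)=-a)$ labels segments by integers so that at each real crossing, with $x$ the label of the under-strand segment to the right of the over-strand and $y$ the label of the over-strand segment to the right of the under-strand (right with respect to strand orientations), the other under-segment is labeled $x+1$ and the other over-segment $y+1$, and labels on the two sides of a bar are negatives of each other. If $K$ has $2n\geq 2$ bars, they cut $K$ into edges $e_1,\dots,e_{2n}$ numbered consecutively along the orientation; for an edge $e$, $o_\pm(e)$ (resp. $u_\pm(e)$) is the number of positive/negative crossings at which $e$ is the over-strand (resp. under-strand), $s(e)=u_+(e)+o_-(e)-u_-(e)-o_+(e)$, and $S(K)=\left|\sum_{i=1}^n s(e_{2i-1})-\sum_{i=1}^n s(e_{2i})\right|$; $S(K)=0$ if there are no bars. A crossing is positive if, with both strands pointing upward, the over-strand runs from bottom-left to top-right. *)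

From HB Require Import structures.
From mathcomp Require Import all_boot all_order all_algebra.
Set Implicit Arguments. Unset Strict Implicit. Unset Printing Implicit Defensive.
Import Order.TTheory GRing.Theory Num.Theory.

(* A twisted knot diagram is encoded by what one meets when travelling once
   around the (single, oriented) component, starting at some point:
   a bar, or a passage over / under the real crossing labelled c.
   Virtual crossings are not recorded (they play no role for colorings
   nor for S).  [sign c = true] means that crossing c is positive. *)
Inductive event := Bar | Over of nat | Under of nat.

Definition event_enc (e : event) : option (bool * nat) :=
  match e with Bar => None | Over c => Some (true, c) | Under c => Some (false, c) end.
Definition event_dec (o : option (bool * nat)) : event :=
  match o with None => Bar | Some (true, c) => Over c | Some (false, c) => Under c end.
Lemma event_encK : cancel event_enc event_dec. Proof. by case. Qed.
HB.instance Definition _ := Equality.copy event (can_type event_encK).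

Record twisted_diagram := TwistedDiagram {
  code : seq event;        (* cyclic sequence of events along the knot *)
  sign : nat -> bool
}.

Definition wf_diagram (K : twisted_diagram) : Prop :=
  uniq [seq e <- code K | e != Bar] /\
  forall c, (Over c \in code K) = (Under c \in code K).

Definition nbars (K : twisted_diagram) : nat := count (pred1 Bar) (code K).

(* Segments: for i < size (code K), segment i is the piece of the knot from
   event i to event i+1 (cyclically).  Segment entering / leaving event i: *)
Definition seg_in (K : twisted_diagram) (i : nat) : nat :=
  (i + size (code K)).-1 %% size (code K).
Definition seg_out (K : twisted_diagram) (i : nat) : nat := i.

Definition is_coloring (K : twisted_diagram) (col : nat -> int) : Prop :=
  (forall i, i < size (code K) -> nth Bar (code K) i = Bar ->
     (col (seg_out K i) = - col (seg_in K i))%R) /\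
  (forall i j c, i < size (code K) -> j < size (code K) ->
     nth Bar (code K) i = Under c -> nth Bar (code K) j = Over c ->
     if sign K c then
       (* positive: right of over-strand = incoming under segment,
          right of under-strand = outgoing over segment *)
       (col (seg_out K i) = col (seg_in K i) + 1 /\
       col (seg_in K j) = col (seg_out K j) + 1)%R
     else
       (* negative: right of over-strand = outgoing under segment,
          right of under-strand = incoming over segment *)
       (col (seg_in K i) = col (seg_out K i) + 1 /\
       col (seg_out K j) = col (seg_in K j) + 1)%R).

Definition colorable (K : twisted_diagram) : Prop := exists col, is_coloring K col.

Fixpoint split_bars (s : seq event) : seq (seq event) :=
  match s with
  | [::] => [:: [::]]
  | Bar :: s' => [::] :: split_bars s'
  | e :: s' =>
      match split_bars s' with
      | h :: t => (e :: h) :: t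
      | [::] => [:: [:: e]]
      end
  end.

(* The edges e_1, ..., e_{2n}, numbered consecutively from the first bar of
   the code (list index k stands for e_{k+1}); no edges if no bars. *)
Definition edges (K : twisted_diagram) : seq (seq event) :=
  if Bar \in code K then
    split_bars (behead (rot (index Bar (code K)) (code K)))
  else [::].

Definition o_plus (K : twisted_diagram) (e : seq event) : nat :=
  count (fun x => if x is Over c then sign K c else false) e.
Definition o_minus (K : twisted_diagram) (e : seq event) : nat :=
  count (fun x => if x is Over c then ~~ sign K c else false) e.
Definition u_plus (K : twisted_diagram) (e : seq event) : nat :=
  count (fun x => if x is Under c then sign K c else false) e.
Definition u_minus (K : twisted_diagram) (e : seq event) : nat :=
  count (fun x => if x is Under c then ~~ sign K c else false) e.

Definition s_edge (K : twisted_diagram) (e : seq event) : int :=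
  ((u_plus K e)%:Z + (o_minus K e)%:Z - (u_minus K e)%:Z - (o_plus K e)%:Z)%R.

Definition S_inv (K : twisted_diagram) : nat :=
  let E := edges K in
  `| (\sum_(k < size E | ~~ odd k) s_edge K (nth [::] E k)
      - \sum_(k < size E | odd k) s_edge K (nth [::] E k))%R |%N.

From HB Require Import structures.
From mathcomp Require Import all_boot all_order all_algebra.
From mathcomp Require Import ring lra zify.
Import Order.TTheory GRing.Theory Num.Theory.
Local Open Scope ring_scope.

(* Going once around the knot, a coloring is determined by the label [x] of
   one segment: each event maps the label before it to the label after it,
   by [x |-> -x] at a bar and [x |-> x +- 1] at a crossing.  Colorings are
   thus the fixed points of the composite map [transport], and it is enough
   to compute it starting just after a bar.  Reading the events edge by edge,
   the odd number of remaining bars turns it into [x |-> x - A] with [A] the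
   alternating sum of the [s(e_k)], so a fixed point exists iff [A = 0], i.e.
   iff [S(K) = 0].  Without bars the composite is a translation by the total
   shift, which vanishes since every crossing is met once over and once
   under with opposite shifts. *)

Definition event_shift (K : twisted_diagram) (e : event) : int :=
  match e with
  | Bar => 0
  | Over c => if sign K c then -1 else 1
  | Under c => if sign K c then 1 else -1
  end.

Definition event_step (K : twisted_diagram) (e : event) (x : int) : int :=
  if e is Bar then - x else x + event_shift K e.

Definition transport (K : twisted_diagram) (s : seq event) (x : int) : int :=
  foldl (fun y e => event_step K e y) x s.

Lemma transport_cat K s t x :
  transport K (s ++ t) x = transport K t (transport K s x).
Proof. by rewrite /transport foldl_cat. Qed.

Lemma transport_rcons K s e x :
  transport K (rcons s e) x = event_step K e (transport K s x).
Proof. by rewrite /transport foldl_rcons. Qed.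

Lemma transport_cons K e s x :
  transport K (e :: s) x = transport K s (event_step K e x).
Proof. by []. Qed.

Definition locally_colored (K : twisted_diagram) (col : nat -> int) : Prop :=
  forall i, (i < size (code K))%N ->
    col i = event_step K (nth Bar (code K) i) (col (seg_in K i)).

Lemma coloringP (K : twisted_diagram) (col : nat -> int) :
  (forall c, (Over c \in code K) = (Under c \in code K)) ->
  is_coloring K col <-> locally_colored K col.
Proof.
move=> over_under; split.
- case=> bar_rule cross_rule i lt_i; rewrite /event_step.
  case ei: (nth Bar (code K) i) => [|c|c] /=.
  + exact: bar_rule.
  + have under_c : Under c \in code K by rewrite -over_under -ei mem_nth.
    have lt_j : (index (Under c) (code K) < size (code K))%N by rewrite index_mem.
    have := cross_rule _ _ c lt_j lt_i (nth_index _ under_c) ei.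
    by rewrite /seg_out; case: (sign K c) => -[_ ->]; ring.
  + have over_c : Over c \in code K by rewrite over_under -ei mem_nth.
    have lt_j : (index (Over c) (code K) < size (code K))%N by rewrite index_mem.
    have := cross_rule _ _ c lt_i lt_j ei (nth_index _ over_c).
    by rewrite /seg_out; case: (sign K c) => -[-> _]; ring.
- move=> loc; split=> [i lt_i ei | i j c lt_i lt_j ei ej].
  + by rewrite /seg_out loc // ei.
  + rewrite /seg_out (loc i lt_i) (loc j lt_j) ei ej /=.
    by case: (sign K c); split; ring.
Qed.

Lemma seg_in0 K : (0 < size (code K))%N -> seg_in K 0 = (size (code K)).-1.
Proof. by move=> size_gt0; rewrite /seg_in add0n modn_small // prednK. Qed.

Lemma seg_inS K i : (i.+1 < size (code K))%N -> seg_in K i.+1 = i.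
Proof. by move=> lt_i; rewrite /seg_in addSn /= modnDr modn_small //; lia. Qed.

Lemma locally_colored_transport K :
  (exists col, locally_colored K col) <-> exists x, transport K (code K) x = x.
Proof.
have [size0 | size_gt0] := posnP (size (code K)).
  split=> _; last by exists (fun _ => 0) => i; rewrite size0.
  by exists 0; rewrite (size0nil size0).
split=> [[col loc] | [x fix_x]].
- exists (col (size (code K)).-1).
  suff prefix_col k : (k < size (code K))%N ->
      transport K (take k.+1 (code K)) (col (size (code K)).-1) = col k.
    by rewrite -{1}(take_size (code K)) -{1}(prednK size_gt0) prefix_col ?prednK.
  elim: k => [|k IHk] lt_k; rewrite (take_nth Bar lt_k) transport_rcons.
  + by rewrite take0 (loc 0 lt_k) seg_in0.
  + by rewrite IHk ?(loc _ lt_k) ?seg_inS //; lia.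
- exists (fun k => transport K (take k.+1 (code K)) x) => -[|i] lt_i.
  + by rewrite seg_in0 // prednK // take_size fix_x (take_nth Bar lt_i) take0.
  + by rewrite seg_inS // (take_nth Bar lt_i) transport_rcons.
Qed.

Lemma transport_fixpoint_rot K s k :
  (exists x, transport K s x = x) <-> exists x, transport K (rot k s) x = x.
Proof.
have rot_fix t m : (exists x, transport K t x = x) ->
    exists x, transport K (rot m t) x = x.
  case=> x fix_x; exists (transport K (take m t) x).
  by rewrite /rot transport_cat -(transport_cat K (take m t)) cat_take_drop fix_x.
split; first exact: rot_fix.
by rewrite -{2}(rotK k s); apply: rot_fix.
Qed.

Definition alternating_sum (K : twisted_diagram) (E : seq (seq event)) : int :=
  foldr (fun e acc => s_edge K e - acc) 0 E.

Lemma alternating_sumE K E :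
  \sum_(k < size E | ~~ odd k) s_edge K (nth [::] E k)
    - \sum_(k < size E | odd k) s_edge K (nth [::] E k) = alternating_sum K E.
Proof.
elim: E => [|e E IHE]; first by rewrite !big_ord0 subr0.
rewrite /= -IHE !(big_mkcond (fun k : 'I_ _ => ~~ odd k))
  !(big_mkcond (fun k : 'I_ _ => odd k)) !big_ord_recl /=.
under eq_bigr do rewrite negbK.
ring.
Qed.

Lemma s_edge_nil K : s_edge K [::] = 0.
Proof. by []. Qed.

Lemma s_edge_cons K e s : s_edge K (e :: s) = event_shift K e + s_edge K s.
Proof.
rewrite /s_edge /o_plus /o_minus /u_plus /u_minus /=.
by case: e => [|c|c] /=; [|case: (sign K c)..]; rewrite ?add0n ?add1n; lia.
Qed.

Lemma split_bars_neq_nil s : split_bars s != [::].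
Proof. by case: s => [|[|c|c] s] //=; case: (split_bars s). Qed.

(* Each bar reverses the sign of everything accumulated so far, which is why
   consecutive edges contribute with alternating signs. *)
Lemma transport_split_bars K s x :
  transport K s x =
    if odd (count (pred1 Bar) s) then - (x + alternating_sum K (split_bars s))
    else x + alternating_sum K (split_bars s).
Proof.
elim: s x => [|e s IHs] x; first by rewrite /= addr0.
rewrite transport_cons IHs /=.
case: e => [|c|c] /=; first by rewrite s_edge_nil; case: (odd _); ring.
all: have := split_bars_neq_nil s.
all: by case: (split_bars s) => [|h r] //= _; rewrite s_edge_cons /=;
  case: (odd _); ring.
Qed.

Lemma transport_bar_free K s x :
  Bar \notin s -> transport K s x = x + \sum_(e <- s) event_shift K e.
Proof.
elim: s x => [|e s IHs] x; first by rewrite big_nil addr0.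
rewrite in_cons negb_or big_cons => /andP[e_neq s_free].
by rewrite transport_cons IHs //; case: e e_neq => // c _ /=; rewrite addrA.
Qed.

Definition swap_strand (e : event) : event :=
  match e with Bar => Bar | Over c => Under c | Under c => Over c end.

Lemma swap_strandK : involutive swap_strand. Proof. by case. Qed.

Lemma event_shift_swap K e : event_shift K (swap_strand e) = - event_shift K e.
Proof. by case: e => [|c|c] //=; case: (sign K c). Qed.

(* Swapping over and under permutes the crossing events of a well-formed
   diagram, and negates every shift. *)
Lemma sum_event_shift_wf K : wf_diagram K -> \sum_(e <- code K) event_shift K e = 0.
Proof.
case=> uniq_cross over_under.
set f := [seq e <- code K | e != Bar].
have -> : \sum_(e <- code K) event_shift K e = \sum_(e <- f) event_shift K e.
  by rewrite big_filter [RHS]big_mkcond; apply: eq_bigr => -[|c|c].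
have swap_inj := inv_inj swap_strandK.
have perm_swap : perm_eq f (map swap_strand f).
  apply: uniq_perm => //; first by rewrite map_inj_uniq.
  move=> e; rewrite -{2}(swap_strandK e) mem_map //.
  by case: e => [|c|c]; rewrite !mem_filter //= over_under.
have : \sum_(e <- f) event_shift K e = - \sum_(e <- f) event_shift K e.
  rewrite {1}(perm_big _ perm_swap) big_map -sumrN.
  by apply: eq_bigr => e _; rewrite event_shift_swap.
lia.
Qed.

Lemma colorable_transport K :
  wf_diagram K -> colorable K <-> exists x, transport K (code K) x = x.
Proof.
case=> _ over_under; rewrite -locally_colored_transport /colorable.
by split=> -[col col_ok]; exists col; move: col_ok; rewrite coloringP.
Qed.

Lemma transport_fixpoint_bar_free K :
  wf_diagram K -> Bar \notin code K -> exists x, transport K (code K) x = x.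
Proof.
by move=> wfK bar_free; exists 0; rewrite transport_bar_free // sum_event_shift_wf.
Qed.

Lemma transport_fixpoint_bar K :
  Bar \in code K -> ~~ odd (nbars K) ->
  (exists x, transport K (code K) x = x) <-> S_inv K = 0%N.
Proof.
move=> has_bar even_bars.
set i := index Bar (code K).
have rot_bar : rot i (code K) = Bar :: behead (rot i (code K)).
  by rewrite /rot (drop_nth Bar) ?index_mem // nth_index.
have odd_rest : odd (count (pred1 Bar) (behead (rot i (code K)))).
  move: even_bars.
  rewrite /nbars -(permP (permEl (perm_rot i (code K))) (pred1 Bar)) rot_bar.
  by rewrite /= add0n negbK.
rewrite (transport_fixpoint_rot _ _ i) rot_bar /S_inv /edges has_bar -/i alternating_sumE.
set A := alternating_sum K _.
have transportE y : transport K (Bar :: behead (rot i (code K))) y = y - A.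
  by rewrite transport_cons transport_split_bars odd_rest /=; ring.
split=> [[y] | /eqP].
- by rewrite transportE => fix_y; apply/eqP; rewrite absz_eq0; apply/eqP; lia.
- by rewrite absz_eq0 => /eqP A0; exists 0; rewrite transportE A0.
Qed.

Theorem lemma7p6 (K : twisted_diagram) :
  wf_diagram K -> ~~ odd (nbars K) -> (colorable K <-> S_inv K = 0%N).
Proof.
move=> wfK even_bars; rewrite colorable_transport //.
have [has_bar | bar_free] := boolP (Bar \in code K).
  exact: transport_fixpoint_bar.
have -> : S_inv K = 0%N by rewrite /S_inv /edges (negbTE bar_free) /= !big_ord0.
by split=> _ //; apply: transport_fixpoint_bar_free.
Qed.
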